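(* Let $m\ge1$, $q=2^m$, let $n$ be even, and let $L$ be a $2$-linear polynomial over $\mathbb F_{q^n}$ that induces a bijection of $\mathbb F_{q^n}$, with inverse map written as \[L^{-1}(x)=\sum_{i=0}^{m-1}L_i\big(x^{2^i}\big),\] where each $L_i$ is a $q$-linear polynomial over $\mathbb F_{q^n}$. Then the following are equivalent: (a) $\mathrm{Tr}(x^{q+1})+L(x)$ is a permutation polynomial of $\mathbb F_{q^n}$; (b) $L_i(1)\in\mathbb F_{q^2}$ for $0\le i<m$; (c) $\mathbb F_q\subseteq L(\mathbb F_{q^2})$.
   Context: $\mathrm{Tr}$ denotes the trace map of $\mathbb F_{q^n}$ over $\mathbb F_q$. A $2$-linear polynomial over $\mathbb F_{q^n}$ has the form $\sum_{j=0}^{mn-1}a_jx^{2^j}$; a $q$-linear polynomial has the form $\sum_{j=0}^{n-1}a_jx^{q^j}$ ($a_j\in\mathbb F_{q^n}$); every $2$-linear polynomial can be written as $\sum_{i=0}^{m-1}L_i(x^{2^i})$ with $q$-linear $L_i$. Polynomials are regarded as maps on $\mathbb F_{q^n}$. *)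

From mathcomp Require Import all_boot all_algebra all_field.
Unset Implicit Arguments.
Import GRing.Theory.
Local Open Scope ring_scope.

(* Throughout, F is a finite field with q^n elements, q = 2^m. *)

Definition lin2 (F : finFieldType) (m n : nat) (a : 'I_(m * n) -> F) (x : F) : F :=
  \sum_(j < m * n) a j * x ^+ (2 ^ j).

Definition linq (F : finFieldType) (m n : nat) (b : 'I_n -> F) (x : F) : F :=
  \sum_(j < n) b j * x ^+ ((2 ^ m) ^ j).

Definition trq (F : finFieldType) (m n : nat) (x : F) : F :=
  \sum_(j < n) x ^+ ((2 ^ m) ^ j).

Definition inFqk (F : finFieldType) (m k : nat) (x : F) : bool :=
  x ^+ ((2 ^ m) ^ k) == x.

Arguments lin2 {F} m n a x.
Arguments linq {F} m n b x.
Arguments trq {F} m n x.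
Arguments inFqk {F} m k x.

From mathcomp Require Import all_boot all_algebra all_field ring.
Import GRing.Theory.

Set Implicit Arguments.
Unset Strict Implicit.
Unset Printing Implicit Defensive.

Local Open Scope ring_scope.

(** Write Q(x) = Tr(x^(q+1)), so that the polynomial is f = Q + L. As n is
    even, Q is invariant under translation by F_(q^2); for d outside F_(q^2)
    the polarization x |-> Q(x + d) - Q(x) - Q(d) = Tr(x (d^q + d^(q^(n-1))))
    maps onto F_q. If f(x) = f(y), then d = x - y has L(d) = Q(x) - Q(y) in
    F_q; so if L^-1 maps F_q into F_(q^2), then Q(x) = Q(y), L(d) = 0 and
    x = y. Conversely, if d = L^-1(c) lies outside F_(q^2) for some c in F_q,
    polarization yields x with f(x + d) = f(x). That L^-1 maps F_q into
    F_(q^2) is (c) because L is bijective, and it is (b) because for c in F_q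
    L^-1(c)^(q^2) - L^-1(c) = sum_i (L_i(1)^(q^2) - L_i(1)) c^(2^i), a
    linearized polynomial of degree < q vanishing on the q elements of F_q. *)

Lemma expr_pow_fixed (R : pzSemiRingType) (k j : nat) (x : R) :
  x ^+ k = x -> x ^+ (k ^ j) = x.
Proof.
by move=> xk; elim: j => [|j IHj]; rewrite ?expn0 ?expr1 // expnSr exprM IHj.
Qed.

Section Char2Ring.

Variables (R : comNzRingType) (pcharR2 : 2 \in [pchar R]).

Lemma exprD_pow2 k (x y : R) : (x + y) ^+ (2 ^ k) = x ^+ (2 ^ k) + y ^+ (2 ^ k).
Proof. by apply: exprDn_pchar; rewrite pnatX (pnatE _ (isT : prime 2)) pcharR2. Qed.

Lemma expr_sum_pow2 k (I : Type) (r : seq I) (P : pred I) (f : I -> R) :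
  (\sum_(i <- r | P i) f i) ^+ (2 ^ k) = \sum_(i <- r | P i) f i ^+ (2 ^ k).
Proof.
by elim/big_rec2: _ => [|i y1 y2 _ <-]; rewrite ?exprD_pow2 // expr0n expn_eq0.
Qed.

Lemma addr_pchar2_cancel (x y z w : R) : x + (y + z) = w + y -> z = x + w.
Proof.
move=> e; rewrite -[z](addKr (x + y)) -addrA e oppr_pchar2 //.
by rewrite addrACA addrr_pchar2 // addr0.
Qed.

End Char2Ring.

Lemma card_roots_leq (F : finFieldType) (A : {pred F}) (p : {poly F}) :
  p != 0 -> {in A, forall x, root p x} -> (#|A| < size p)%N.
Proof.
move=> p_neq0 rootA; rewrite cardE max_poly_roots ?enum_uniq //.
by apply/allP => x; rewrite mem_enum; apply: rootA.
Qed.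

Lemma card_expr_fixed_leq (F : finFieldType) k :
  (1 < k)%N -> (#|[pred x : F | x ^+ k == x]| <= k)%N.
Proof.
move=> k_gt1; have sizeP : size ('X^k - 'X : {poly F}) = k.+1.
  by rewrite size_polyDl size_polyXn // size_polyN size_polyX ltnS.
rewrite -ltnS -sizeP card_roots_leq // => [|x]; first by rewrite -size_poly_eq0 sizeP.
by rewrite inE rootE !hornerE subr_eq0.
Qed.

Lemma linearized_poly_coef_eq0 (F : fieldType) m (e : 'I_m -> F) (s : seq F) :
  uniq s -> (2 ^ m <= size s)%N ->
  (forall x, x \in s -> \sum_(i < m) e i * x ^+ (2 ^ i) = 0) ->
  forall i, e i = 0.
Proof.
move=> s_uniq size_s vanish i.
pose P := \sum_(k < m) e k *: 'X^(2 ^ k) : {poly F}.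
have P0 : P = 0.
  apply: (roots_geq_poly_eq0 _ s_uniq).
    apply/allP => x /vanish sum0; rewrite rootE horner_sum -[X in _ == X]sum0.
    by apply/eqP/eq_bigr => k _; rewrite hornerZ hornerXn.
  apply: leq_trans size_s; apply: leq_trans (size_sum _ _ _) _.
  apply/bigmax_leqP => k _; rewrite (leq_trans (size_scale_leq _ _)) //.
  by rewrite size_polyXn ltn_exp2l.
have := congr1 (fun p : {poly F} => p`_(2 ^ i)) P0.
by rewrite coef_sumMXn coef0 (big_pred1 i) // => k /=; rewrite eqn_exp2l.
Qed.

Definition linq_sum (F : finFieldType) m n (b : 'I_m -> 'I_n -> F) (y : F) : F :=
  \sum_(i < m) linq m n (b i) (y ^+ (2 ^ i)).
Arguments linq_sum {F} m n b y.

Definition maps_Fq_to_Fq2 (F : finFieldType) m (g : F -> F) : Prop :=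
  forall c : F, c ^+ (2 ^ m) = c -> g c ^+ ((2 ^ m) ^ 2) = g c.

Section Char2FiniteField.

Variables (F : finFieldType) (pcharF2 : 2 \in [pchar F]) (m n : nat).

Local Notation q := (2 ^ m)%N.
Local Notation Tr := (trq m n).

Lemma lin2D a (x y : F) : lin2 m n a (x + y) = lin2 m n a x + lin2 m n a y.
Proof.
by rewrite /lin2 -big_split; apply: eq_bigr => j _; rewrite exprD_pow2 // mulrDr.
Qed.

Lemma linqD b (x y : F) : linq m n b (x + y) = linq m n b x + linq m n b y.
Proof.
by rewrite /linq -big_split; apply: eq_bigr => j _; rewrite -expnM exprD_pow2 // mulrDr.
Qed.

Lemma linqZ b (c y : F) : c ^+ q = c -> linq m n b (c * y) = c * linq m n b y.
Proof.
move=> cFq; rewrite /linq mulr_sumr; apply: eq_bigr => j _.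
by rewrite exprMn expr_pow_fixed // mulrCA.
Qed.

Lemma linq_sumD b (x y : F) :
  linq_sum m n b (x + y) = linq_sum m n b x + linq_sum m n b y.
Proof.
by rewrite /linq_sum -big_split; apply: eq_bigr => i _; rewrite exprD_pow2 // linqD.
Qed.

Lemma linq_sum0 b : linq_sum m n b 0 = 0 :> F.
Proof. by apply: (addrI (linq_sum m n b 0)); rewrite -linq_sumD // !addr0. Qed.

Lemma linq_sum_Fq b (c : F) : c ^+ q = c ->
  linq_sum m n b c = \sum_(i < m) c ^+ (2 ^ i) * linq m n (b i) 1.
Proof.
move=> cFq; apply: eq_bigr => i _.
by rewrite -linqZ ?mulr1 // exprAC cFq.
Qed.

Lemma linq_sum_Fq_frob2 b (c : F) : c ^+ q = c ->
  linq_sum m n b c ^+ (q ^ 2) - linq_sum m n b c =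
  \sum_(i < m) (linq m n (b i) 1 ^+ (q ^ 2) - linq m n (b i) 1) * c ^+ (2 ^ i).
Proof.
move=> cFq; rewrite linq_sum_Fq // -expnM expr_sum_pow2 // -sumrB.
apply: eq_bigr => i _; have ciFq : (c ^+ (2 ^ i)) ^+ q = c ^+ (2 ^ i).
  by rewrite exprAC cFq.
by rewrite exprMn expnM expr_pow_fixed // mulrBl [_ * c ^+ _]mulrC [X in _ - X]mulrC.
Qed.

Lemma trqD (x y : F) : Tr (x + y) = Tr x + Tr y.
Proof.
by rewrite /trq -big_split; apply: eq_bigr => j _; rewrite -expnM exprD_pow2.
Qed.

Lemma trq_Fq_even (c : F) : ~~ odd n -> c ^+ q = c -> Tr c = 0.
Proof.
move=> n_even cFq; rewrite /trq.
under eq_bigr do rewrite expr_pow_fixed //.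
rewrite sumr_const card_ord -(odd_double_half n) (negbTE n_even) add0n -muln2.
by rewrite mulrnA mulr2n addrr_pchar2.
Qed.

Lemma trq_quadD (y d : F) :
  Tr ((y + d) ^+ (q + 1)) =
  Tr (y ^+ (q + 1)) + Tr (y * d ^+ q) + Tr (d * y ^+ q) + Tr (d ^+ (q + 1)).
Proof. by rewrite !addn1 !exprS exprD_pow2 // mulrDl !mulrDr !addrA !trqD. Qed.

Section FrobeniusPeriod.

Hypothesis Fexp : forall x : F, x ^+ (q ^ n) = x.

Lemma trq_Fq (x : F) : Tr x ^+ q = Tr x.
Proof.
rewrite /trq expr_sum_pow2 //.
under eq_bigr do rewrite -exprM -expnSr.
case: n Fexp => [|n'] Fexp'; first by rewrite !big_ord0.
by rewrite big_ord_recr big_ord_recl /= Fexp' expn0 expr1 addrC.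
Qed.

Lemma trq_frob (x : F) : Tr (x ^+ q) = Tr x.
Proof.
by rewrite -[RHS]trq_Fq /trq expr_sum_pow2 //; apply: eq_bigr => j _; rewrite exprAC.
Qed.

(* Q is invariant under translation by F_(q^2): the two cross terms are
   Frobenius-conjugate, and Q(d) is the trace of an element of F_q. *)
Lemma trq_quad_translate (y d : F) : ~~ odd n -> d ^+ (q ^ 2) = d ->
  Tr ((y + d) ^+ (q + 1)) = Tr (y ^+ (q + 1)).
Proof.
move=> n_even dFq2.
have cross : Tr (d * y ^+ q) = Tr (y * d ^+ q).
  by rewrite -[RHS]trq_frob exprMn -exprM mulnn dFq2 mulrC.
have Qd0 : Tr (d ^+ (q + 1)) = 0.
  by apply: trq_Fq_even => //; rewrite addn1 exprS exprMn -exprM mulnn dFq2 mulrC.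
by rewrite trq_quadD cross Qd0 addr0 -addrA addrr_pchar2 // addr0.
Qed.

End FrobeniusPeriod.

End Char2FiniteField.

Section FiniteField.

Variables (F : finFieldType) (m n : nat).
Hypotheses (m_gt0 : (0 < m)%N) (Fcard : #|F| = ((2 ^ m) ^ n)%N).

Local Notation q := (2 ^ m)%N.
Local Notation Tr := (trq m n).
Local Notation Fq := [pred c : F | c ^+ q == c].

Let pcharF2 : 2 \in [pchar F].
Proof. by apply: (@card_finPcharP _ _ (m * n)) => //; rewrite expnM. Qed.

Let two0 : 2%:R = 0 :> F. Proof. exact: pcharf0 pcharF2. Qed.

Let n_gt0 : (0 < n)%N.
Proof. by case: n Fcard => // F1; have := finNzRing_gt1 F; rewrite F1. Qed.

Let q_gt1 : (1 < q)%N. Proof. by rewrite -{1}(expn0 2) ltn_exp2l. Qed.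

Let Fexp : forall x : F, x ^+ (q ^ n) = x.
Proof. by move=> x; rewrite -Fcard expf_card. Qed.

Lemma card_trq_fiber_leq (y : F) : (#|[pred x : F | Tr x == y]| <= q ^ n.-1)%N.
Proof.
pose P := \sum_(j < n) 'X^(q ^ j) - y%:P : {poly F}.
have coefP : P`_(q ^ n.-1) = 1.
  rewrite coefB coefC expn_eq0 gtn_eqF ?(ltnW q_gt1) // subr0 coef_sum.
  rewrite -(prednK n_gt0) big_ord_recr /= coefXn eqxx big1 ?add0r // => j _.
  by rewrite coefXn eqn_exp2l // gtn_eqF.
rewrite -ltnS (leq_trans (card_roots_leq (p := P) _ _)) //.
- by apply: contraNneq (oner_neq0 F) => P0; rewrite -coefP P0 coef0 eqxx.
- move=> x; rewrite inE rootE hornerD hornerN horner_sum hornerC subr_eq0.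
  by under eq_bigr do rewrite hornerXn.
- rewrite (leq_trans (size_polyD _ _)) // geq_max size_polyN.
  rewrite (leq_trans (size_polyC_leq1 _)) ?andbT //.
  apply: leq_trans (size_sum _ _ _) _; apply/bigmax_leqP => j _.
  by rewrite size_polyXn ltnS leq_exp2l // -ltnS prednK.
Qed.

Lemma card_trq_image_geq : (q <= #|[set Tr x | x : F]|)%N.
Proof.
set I := [set Tr x | x : F].
have : (q ^ n <= #|I| * q ^ n.-1)%N.
  rewrite -Fcard -[#|F|]sum1_card.
  rewrite (partition_big Tr (mem I)) => [|x _]; last exact: imset_f.
  rewrite -sum_nat_const; apply: leq_sum => y _.
  rewrite (leq_trans _ (card_trq_fiber_leq y)) // -sum1_card.
  by apply/eq_leq/eq_bigl => x.
by rewrite -(prednK n_gt0) expnS leq_pmul2r // expn_gt0 (ltnW q_gt1).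
Qed.

Lemma trq_image : [set Tr x | x : F] =i Fq.
Proof.
have sub : [set Tr x | x : F] \subset Fq.
  by apply/subsetP => _ /imsetP[x _ ->]; rewrite inE /= trq_Fq.
apply/subset_cardP => //; apply/eqP; rewrite eqn_leq subset_leq_card //.
exact: leq_trans (card_expr_fixed_leq _ q_gt1) card_trq_image_geq.
Qed.

Lemma card_Fq : #|Fq| = q.
Proof.
apply/eqP; rewrite eqn_leq card_expr_fixed_leq //.
by rewrite -(eq_card trq_image) card_trq_image_geq.
Qed.

Lemma trq_surj (c : F) : c ^+ q = c -> exists x, Tr x = c.
Proof.
move=> cFq; have : c \in [set Tr x | x : F] by rewrite trq_image inE /= cFq eqxx.
by case/imsetP => x _ ->; exists x.
Qed.

(* The polarization of Q at d is x |-> Tr(x e) with e = d^q + d^(q^(n-1)),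
   which vanishes exactly when d lies in F_(q^2). *)
Lemma trq_quad_polar_surj (d t : F) : d ^+ (q ^ 2) != d -> t ^+ q = t ->
  exists x, Tr ((x + d) ^+ (q + 1)) = Tr (x ^+ (q + 1)) + Tr (d ^+ (q + 1)) + t.
Proof.
move=> dNFq2 tFq; pose e := d ^+ q + d ^+ (q ^ n.-1).
have Fexp' (x : F) : x ^+ (q ^ n.-1 * q) = x by rewrite -expnSr prednK // Fexp.
have e_neq0 : e != 0.
  apply: contraNneq dNFq2 => /eqP; rewrite addr_eq0 oppr_pchar2 // => /eqP dq.
  by rewrite -mulnn exprM dq -exprM Fexp' eqxx.
have [z trz] := trq_surj tFq; exists (z / e).
have cross : Tr (d * (z / e) ^+ q) = Tr (z / e * d ^+ (q ^ n.-1)).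
  by rewrite -[RHS]trq_frob // [in RHS]exprMn -exprM Fexp' [d * _]mulrC.
have polar : Tr (z / e * d ^+ q) + Tr (z / e * d ^+ (q ^ n.-1)) = t.
  by rewrite -trqD // -mulrDr -/e divfK.
by rewrite trq_quadD // cross -!addrA; congr (_ + _); rewrite addrA polar addrC.
Qed.

Lemma linq_sum_Fq2P (b : 'I_m -> 'I_n -> F) :
  maps_Fq_to_Fq2 m (linq_sum m n b) <-> forall i, inFqk m 2 (linq m n (b i) 1).
Proof.
split=> [LiFq2 i | coefFq2 c cFq].
  rewrite /inFqk -subr_eq0; apply/eqP; move: i.
  apply: (linearized_poly_coef_eq0 (enum_uniq Fq)); first by rewrite -cardE card_Fq.
  move=> c; rewrite mem_enum inE => /eqP cFq.
  by rewrite -linq_sum_Fq_frob2 // LiFq2 // subrr.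
apply/eqP; rewrite -subr_eq0 linq_sum_Fq_frob2 //; apply/eqP/big1 => i _.
by rewrite (eqP (coefFq2 i)) subrr mul0r.
Qed.

Section PermutationCriterion.

Variables (a : 'I_(m * n) -> F) (b : 'I_m -> 'I_n -> F).

Local Notation L := (lin2 m n a).
Local Notation Linv := (linq_sum m n b).

Hypotheses (lin2K : cancel L Linv) (lin2_bij : bijective L).

Let linq_sumK : cancel Linv L. Proof. exact/(bij_can_sym lin2_bij). Qed.

Lemma lin2_Fq2_imageP :
  maps_Fq_to_Fq2 m Linv <->
  forall y, inFqk m 1 y -> exists2 x, inFqk m 2 x & L x = y.
Proof.
split=> [LiFq2 y | image c cFq].
  rewrite /inFqk expn1 => /eqP yFq.
  by exists (Linv y); [exact/eqP/LiFq2 | exact: linq_sumK].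
have [|x xFq2 <-] := image c; first by rewrite /inFqk expn1 cFq eqxx.
by rewrite lin2K; apply/eqP.
Qed.

Lemma trq_quad_lin2_bij : ~~ odd n -> maps_Fq_to_Fq2 m Linv ->
  bijective (fun x : F => Tr (x ^+ (q + 1)) + L x).
Proof.
move=> n_even LiFq2; apply: injF_bij => x y /=.
have [d ->] : exists d, x = y + d by exists (x - y); rewrite addrC subrK.
rewrite lin2D // => fxy.
have Ld : L d = Tr ((y + d) ^+ (q + 1)) + Tr (y ^+ (q + 1)).
  exact: addr_pchar2_cancel fxy.
have dFq2 : d ^+ (q ^ 2) = d.
  by rewrite -[d]lin2K Ld; apply: LiFq2; rewrite exprD_pow2 // !trq_Fq.
have Ld0 : L d = 0 by rewrite Ld trq_quad_translate // addrr_pchar2.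
by rewrite -[d]lin2K Ld0 linq_sum0 // addr0.
Qed.

Lemma trq_quad_lin2_bij_Fq2 :
  bijective (fun x : F => Tr (x ^+ (q + 1)) + L x) -> maps_Fq_to_Fq2 m Linv.
Proof.
move=> f_bij c cFq; set d := Linv c; have Ld : L d = c := linq_sumK c.
apply/eqP/contraT => dNFq2.
have tFq : (c + Tr (d ^+ (q + 1))) ^+ q = c + Tr (d ^+ (q + 1)).
  by rewrite exprD_pow2 // cFq trq_Fq.
have [x Qxd] := trq_quad_polar_surj dNFq2 tFq.
have fxd : Tr ((x + d) ^+ (q + 1)) + L (x + d) = Tr (x ^+ (q + 1)) + L x.
  by rewrite Qxd lin2D // Ld; ring: two0.
have d0 : d = 0 by apply: (addrI x); rewrite addr0; exact: bij_inj f_bij _ _ fxd.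
by move: dNFq2; rewrite d0 expr0n !expn_eq0 /= eqxx.
Qed.

End PermutationCriterion.

End FiniteField.

Theorem mainTheorem13 (F : finFieldType) (m n : nat)
  (hm : (0 < m)%N) (hn : ~~ odd n) (hF : #|F| = ((2 ^ m) ^ n)%N)
  (a : 'I_(m * n) -> F) (b : 'I_m -> 'I_n -> F)
  (hbij : bijective (lin2 m n a))
  (hinv : forall x : F,
     \sum_(i < m) linq m n (b i) ((lin2 m n a x) ^+ (2 ^ i)) = x) :
  [<-> bijective (fun x : F => trq m n (x ^+ (2 ^ m + 1)) + lin2 m n a x);
       (forall i : 'I_m, inFqk m 2 (linq m n (b i) 1));
       (forall y : F, inFqk m 1 y ->
          exists2 x : F, inFqk m 2 x & lin2 m n a x = y)].
Proof.
have lin2K : cancel (lin2 m n a) (linq_sum m n b) := hinv.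
have coefP := linq_sum_Fq2P hm hF b.
have imageP := lin2_Fq2_imageP lin2K hbij.
tfae => [f_bij | coefFq2 | imageFq2].
- exact/coefP/(trq_quad_lin2_bij_Fq2 hm hF lin2K hbij).
- exact/imageP/coefP.
- exact: (trq_quad_lin2_bij hF lin2K hn (imageP.2 imageFq2)).
Qed.
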